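(* Let $f:[0,1]^d\to\mathbb{R}$ be DR submodular. Let $y:[0,1]\to[0,1]^d$ be coordinatewise non-decreasing, i.e., $y(\mu)\le y(\mu')$ coordinatewise whenever $0\le\mu<\mu'\le1$. Then \[ \int_0^1 f(y(\mu))\,d\mu\le f\Big(\int_0^1y(\mu)\,d\mu\Big). \]
   Context: A smooth (twice continuously differentiable) function $f:[0,1]^d\to\mathbb{R}$ is diminishing-returns (DR) submodular if $\partial_{ij}f(x)\le0$ for all $i,j\in[d]$ and all $x\in[0,1]^d$. *)

From HB Require Import structures.
From mathcomp Require Import all_boot all_order all_algebra.
From mathcomp Require Import all_classical all_reals all_analysis.
Set Implicit Arguments. Unset Strict Implicit. Unset Printing Implicit Defensive.
Import Order.TTheory GRing.Theory Num.Theory.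
Import numFieldNormedType.Exports.
Local Open Scope classical_set_scope.
Local Open Scope ring_scope.

Section Defs.
Context {R : realType} {d : nat}.

Definition basis_vec (i : 'I_d) : 'rV[R]_d := delta_mx 0 i.

Definition partial (i : 'I_d) (g : 'rV[R]_d -> R) : 'rV[R]_d -> R :=
  fun x => 'D_(basis_vec i) g x.

Definition in_cube (x : 'rV[R]_d) : Prop := forall i, 0 <= x 0 i <= 1.

Definition twice_cont_diff (f : 'rV[R]_d -> R) : Prop :=
  (forall x, differentiable f x) /\
  (forall i x, differentiable (partial i f) x) /\
  (forall i j, continuous (partial j (partial i f))).

Definition DR_submodular (f : 'rV[R]_d -> R) : Prop :=
  twice_cont_diff f /\
  forall i j x, in_cube x -> partial j (partial i f) x <= 0.

Definition coord_nondecr (y : R -> 'rV[R]_d) : Prop :=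
  forall mu mu' : R, 0 <= mu -> mu < mu' -> mu' <= 1 ->
    forall i, y mu 0 i <= y mu' 0 i.

Definition vec_integral01 (y : R -> 'rV[R]_d) : 'rV[R]_d :=
  \row_i Rintegral lebesgue_measure `[0%R, 1%R] (fun mu => y mu 0 i).

End Defs.

From HB Require Import structures.
From mathcomp Require Import all_boot all_order all_algebra.
From mathcomp Require Import all_classical all_reals all_analysis.
From mathcomp Require Import lra measurable_realfun.
Set Implicit Arguments. Unset Strict Implicit. Unset Printing Implicit Defensive.
Import Order.TTheory GRing.Theory Num.Theory.
Import numFieldNormedType.Exports.
Local Open Scope classical_set_scope.
Local Open Scope ring_scope.

(* Replace the coordinates of y(mu) by their averages, one at a time.  Along the
   k-th coordinate direction a DR-submodular f is concave, so, writing p(mu) for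
   y(mu) with its k-th coordinate replaced by the average c,
     f (y mu) <= f (p mu) + d_k f (p mu) * (y_k mu - c).
   Since d_k f is antitone for the coordinatewise order on the cube and p is a
   monotone path, mu |-> d_k f (p mu) is nonincreasing, while y_k - c is
   nondecreasing with zero mean; by Chebyshev's integral inequality the last
   term integrates to a nonpositive number.  So no replacement decreases the
   integral, and after d steps the path is constant.  Measurability of f o y is
   obtained from the same monotonicity: f is Lipschitz along monotone paths in
   the cube, hence f o y has bounded variation. *)

Local Notation I01 := (Rintegral lebesgue_measure (`[0%R, 1%R] : set _)).

Section interval_integral.
Context {R : realType} (a b : R).
Local Notation I := (Rintegral lebesgue_measure (`[a, b] : set R)).

Let clamp (x : R) : R := Num.max a (Num.min x b).

Lemma nondecreasing_itv_measurable (h : R -> R) :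
  {in `[a, b] &, {homo h : s t / s <= t}} -> measurable_fun `[a, b] h.
Proof.
move=> hh; have [ab|ba] := leP a b; last first.
  by rewrite set_itv_ge ?bnd_simp -?ltNge //; exact: measurable_fun_set0.
have clampE x : x \in `[a, b] -> clamp x = x.
  by rewrite in_itv /= => /andP[ax xb]; rewrite /clamp (min_l xb) (max_r ax).
have clamp_itv x : clamp x \in `[a, b].
  by rewrite in_itv /= le_max lexx ge_max ab ge_min lexx orbT.
apply: (eq_measurable_fun (h \o clamp)) => [x /[!inE] /clampE /= -> //|].
apply: nondecreasing_measurable => // s t st /=.
by apply: hh; rewrite ?clamp_itv // /clamp le_max2 // le_min2.
Qed.

Lemma nonincreasing_itv_measurable (h : R -> R) :
  {in `[a, b] &, {homo h : s t /~ s <= t}} -> measurable_fun `[a, b] h.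
Proof.
move=> hh; rewrite -(opprK h); apply/measurable_funN.
by apply: nondecreasing_itv_measurable => s t sI tI st; rewrite lerN2 hh.
Qed.

Lemma bounded_itv_integrable (h : R -> R) (B : R) :
  measurable_fun `[a, b] h -> {in `[a, b], forall x, `|h x| <= B} ->
  lebesgue_measure.-integrable `[a, b] (EFin \o h).
Proof.
move=> mh hB; apply: measurable_bounded_integrable => //.
  by rewrite /= lebesgue_measure_itv; case: ifP => _; rewrite ltry.
exists B; split; first exact: num_real.
by move=> M BM x xI; rewrite /= (le_trans (hB x _)) ?inE // ltW.
Qed.

Lemma monotone_mul_itv_integrable (D w : R -> R) (BD Bw : R) :
  {in `[a, b] &, {homo D : s t /~ s <= t}} ->
  {in `[a, b] &, {homo w : s t / s <= t}} ->
  {in `[a, b], forall x, `|D x| <= BD} ->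
  {in `[a, b], forall x, `|w x| <= Bw} ->
  lebesgue_measure.-integrable `[a, b] (EFin \o (fun x => D x * w x)).
Proof.
move=> Dan wnd DB wB; apply: (bounded_itv_integrable (B := BD * Bw)).
  apply: measurable_funM.
    exact: nonincreasing_itv_measurable.
  exact: nondecreasing_itv_measurable.
by move=> x xI; rewrite normrM ler_pM ?DB ?wB.
Qed.

Lemma antitone_sign_threshold (D w : R -> R) (B : R) :
  {in `[a, b] &, {homo D : s t /~ s <= t}} ->
  {in `[a, b] &, {homo w : s t / s <= t}} ->
  {in `[a, b], forall x, `|D x| <= B} ->
  exists K, {in `[a, b], forall x, (D x - K) * w x <= 0}.
Proof.
move=> Dan wnd DB.
(* [- B] only makes [T] nonempty: it lies below every value of [D]. *)
pose T := - B |` [set D x | x in [set x | x \in `[a, b] /\ 0 < w x]].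
have supT : has_sup T.
  split; first by exists (- B); left.
  exists `|B| => _ [->|[x [xI _] <-]]; first by rewrite -normrN ler_norm.
  by rewrite (le_trans (ler_norm _)) // (le_trans (DB x xI)) // ler_norm.
exists (sup T) => x xI.
have [wx_neg|wx_pos|->] := ltgtP (w x) 0; last by rewrite mulr0.
- suff : sup T <= D x by move=> ?; nra.
  apply: ge_sup => [|_ [->|[z [zI wz] <-]]]; first by exists (- B); left.
    by have := DB x xI; rewrite ler_norml => /andP[].
  apply: Dan => //; rewrite leNgt; apply/negP => zx.
  by have := wnd z x zI xI (ltW zx); lra.
- suff : D x <= sup T by move=> ?; nra.
  by apply: sup_upper_bound => //; right; exists x.
Qed.

Lemma chebyshev_Rintegral_le0 (D w : R -> R) (B : R) :
  {in `[a, b] &, {homo D : s t /~ s <= t}} ->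
  {in `[a, b] &, {homo w : s t / s <= t}} ->
  {in `[a, b], forall x, `|D x| <= B} ->
  {in `[a, b], forall x, `|w x| <= B} ->
  I w = 0 -> I (fun x => D x * w x) <= 0.
Proof.
move=> Dan wnd DB wB w0.
have [K DKw] := antitone_sign_threshold Dan wnd DB.
have iw := bounded_itv_integrable (nondecreasing_itv_measurable wnd) wB.
have DK_anti : {in `[a, b] &, {homo (fun x => D x - K) : s t /~ s <= t}}.
  by move=> s t sI tI st; rewrite lerD2r Dan.
have DKB : {in `[a, b], forall x, `|D x - K| <= B + `|K|}.
  by move=> x xI; rewrite (le_trans (ler_normB _ _)) // lerD2r DB.
have iDKw := monotone_mul_itv_integrable DK_anti wnd DKB wB.
have iKw := monotone_mul_itv_integrable (D := fun=> K)
  (fun _ _ _ _ _ => lexx K) wnd (fun _ _ => lexx `|K|) wB.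
have -> : I (fun x => D x * w x) = I (fun x => (D x - K) * w x + K * w x).
  by apply: eq_Rintegral => x _; rewrite mulrBl subrK.
rewrite RintegralD // RintegralZl // w0 mulr0 addr0.
rewrite -(mul0r (fine (lebesgue_measure (`[a, b] : set R)))) -Rintegral_cst //.
apply: le_Rintegral => //.
by apply: (bounded_itv_integrable (B := 0)) => // x _; rewrite normr0.
Qed.

End interval_integral.

Section segment.
Context {R : realType} {V : normedModType R}.

Lemma is_derive_segment (g : V -> R) (a v : V) (t : R) :
  derivable g (a + t *: v) v ->
  is_derive t 1 (fun s => g (a + s *: v)) ('D_v g (a + t *: v)).
Proof.
pose x := a + t *: v.
have quotE : (fun h : R =>
    h^-1 *: (((fun s => g (a + s *: v)) \o shift t) (h *: 1) - g x)) =
  (fun h => h^-1 *: ((g \o shift x) (h *: v) - g x)).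
  apply/funext => h /=; congr (_ *: (g _ - _)).
  by rewrite -[h *: 1]/(h * 1) mulr1 scalerDl addrCA addrA.
move=> dg; have dphi : derivable (fun s : R => g (a + s *: v)) t 1.
  by rewrite /derivable quotE.
by apply: DeriveDef => //; rewrite /derive quotE.
Qed.

Lemma MVT_segment_derive (g : V -> R) (a b : V) :
  (forall t, 0 <= t <= 1 -> differentiable g (a + t *: (b - a))) ->
  exists2 c, 0 <= c <= 1 & g b - g a = 'D_(b - a) g (a + c *: (b - a)).
Proof.
move=> dg; pose phi := fun s : R => g (a + s *: (b - a)).
have phiD (s : R) : 0 <= s <= 1 ->
    is_derive s 1 phi ('D_(b - a) g (a + s *: (b - a))).
  by move=> /dg/diff_derivable/is_derive_segment.
have phiC : {within `[0, 1], continuous phi}.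
  by apply: derivable_within_continuous => s /[1!in_itv] /= /phiD [].
have [s /[1!in_itv] /= /andP[s0 s1]|c c01] := @MVT_segment _ phi
  (fun s : R => 'D_(b - a) g (a + s *: (b - a))) 0 1 ler01 _ phiC.
  by apply: phiD; rewrite !ltW.
rewrite /phi scale1r scale0r addr0 subrKC subr0 mulr1 => ->.
by exists c; rewrite -?in_itv.
Qed.

End segment.

Section unit_interval.
Context {R : realType}.

Lemma Rintegral01_cst (c : R) : I01 (fun=> c) = c.
Proof.
rewrite Rintegral_cst //= lebesgue_measure_itv /= lte_fin ltr01.
by rewrite oppr0 adde0 mulr1.
Qed.

Lemma Rintegral01_mem01 (h : R -> R) :
  {in `[0, 1] &, {homo h : s t / s <= t}} ->
  {in `[0, 1], forall x, 0 <= h x <= 1} -> 0 <= I01 h <= 1.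
Proof.
move=> hnd h01; apply/andP; split.
  by apply: Rintegral_ge0 => x /h01 /andP[].
rewrite -[leRHS](Rintegral01_cst 1); apply: le_Rintegral => //.
- apply: (bounded_itv_integrable (B := 1)) => [|x /h01 /andP[h0 h1]].
    exact: nondecreasing_itv_measurable.
  by rewrite ger0_norm.
- by apply: (bounded_itv_integrable (B := 1)) => // x _; rewrite normr1.
- by move=> x /h01 /andP[].
Qed.

End unit_interval.

Section cube.
Context {R : realType} {d : nat}.
Implicit Types (a b x : 'rV[R]_d) (g : 'rV[R]_d -> R).

Definition coord_le a b := forall i, a 0 i <= b 0 i.

Definition monotone_path (z : R -> 'rV[R]_d) :=
  {in `[0, 1] &, forall s t, s <= t -> coord_le (z s) (z t)}.

Definition set_coord x (k : 'I_d) (c : R) : 'rV[R]_d :=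
  \row_i if i == k then c else x 0 i.

Lemma coord_nondecr_path (z : R -> 'rV[R]_d) : coord_nondecr z -> monotone_path z.
Proof.
move=> zm s t /[1!in_itv] /andP[s0 _] /[1!in_itv] /andP[_ t1].
by rewrite le_eqVlt => /predU1P[->//|st] i; apply: zm.
Qed.

Lemma derive_partialE g x v : differentiable g x ->
  'D_v g x = \sum_j v 0 j * partial j g x.
Proof.
move=> dg; rewrite deriveE // {1}(row_sum_delta v) linear_sum.
by apply: eq_bigr => j _; rewrite linearZ /= /partial deriveE.
Qed.

Lemma in_cube_segment a b t : in_cube a -> in_cube b -> 0 <= t <= 1 ->
  in_cube (a + t *: (b - a)).
Proof.
move=> ha hb /andP[t0 t1] i; rewrite !mxE.
by have /andP[? ?] := ha i; have /andP[? ?] := hb i; apply/andP; split; nra.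
Qed.

Lemma in_cube0 : in_cube (0 : 'rV[R]_d).
Proof. by move=> i; rewrite mxE lexx ler01. Qed.

Lemma in_cube1 : in_cube (const_mx 1 : 'rV[R]_d).
Proof. by move=> i; rewrite mxE lexx ler01. Qed.

Lemma set_coord_in_cube x k c : in_cube x -> 0 <= c <= 1 ->
  in_cube (set_coord x k c).
Proof. by move=> hx c01 i; rewrite mxE; case: ifP. Qed.

Lemma set_coord_path (z : R -> 'rV[R]_d) k c : monotone_path z ->
  monotone_path (fun mu => set_coord (z mu) k c).
Proof.
by move=> zm s t sI tI st i; rewrite !mxE; case: ifP => // _; apply: zm.
Qed.

End cube.

Section DR_submodular.
Context {R : realType} {d : nat} (f : 'rV[R]_d -> R).
Hypothesis f_DR : DR_submodular f.
Implicit Types (a b p q x : 'rV[R]_d).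

Let f_diff x : differentiable f x.
Proof. by case: f_DR => -[]. Qed.

Let partial_diff k x : differentiable (partial k f) x.
Proof. by case: f_DR => -[_ []]. Qed.

Let partial2_le0 k j x : in_cube x -> partial j (partial k f) x <= 0.
Proof. by case: f_DR => _; apply. Qed.

Lemma partial_antitone k a b : in_cube a -> in_cube b -> coord_le a b ->
  partial k f b <= partial k f a.
Proof.
move=> ha hb hab; rewrite -subr_le0.
have [c c01 ->] :=
  MVT_segment_derive (fun t _ => partial_diff k (a + t *: (b - a))).
rewrite derive_partialE //; apply: sumr_le0 => j _.
rewrite mulr_ge0_le0 //; first by rewrite !mxE subr_ge0.
exact/partial2_le0/in_cube_segment.
Qed.

Lemma DR_coord_concave k p q : in_cube p -> in_cube q ->
  (forall i, i != k -> q 0 i = p 0 i) ->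
  f q <= f p + partial k f p * (q 0 k - p 0 k).
Proof.
move=> hp hq hpq; rewrite -lerBlDl.
have [c /andP[c0 c1] ->] :=
  MVT_segment_derive (fun t _ => f_diff (p + t *: (q - p))).
set pc := p + c *: (q - p).
have pc_cube : in_cube pc by apply: in_cube_segment; rewrite ?c0.
have pcE i : pc 0 i = p 0 i + c * (q 0 i - p 0 i) by rewrite /pc !mxE.
have pc_off i : i != k -> pc 0 i = p 0 i.
  by move=> ik; rewrite pcE hpq // subrr mulr0 addr0.
rewrite derive_partialE // (bigD1 k) //= big1 ?addr0 => [|i ik]; last first.
  by rewrite !mxE hpq // subrr mul0r.
rewrite !mxE mulrC; have [pq|qp] := leP (p 0 k) (q 0 k).
- have : partial k f pc <= partial k f p.
    apply: partial_antitone => // i; have [->|/pc_off -> //] := eqVneq i k.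
    by rewrite pcE; nra.
  by move=> ?; nra.
- have : partial k f p <= partial k f pc.
    apply: partial_antitone => // i; have [->|/pc_off -> //] := eqVneq i k.
    by rewrite pcE; nra.
  by move=> ?; nra.
Qed.

Definition partial_bound (j : 'I_d) :=
  `|partial j f 0| + `|partial j f (const_mx 1)|.

Lemma partial_bound_ge0 j : 0 <= partial_bound j.
Proof. exact: addr_ge0. Qed.

Lemma norm_partial_le j x : in_cube x -> `|partial j f x| <= partial_bound j.
Proof.
move=> hx; have le0x : partial j f x <= partial j f 0.
  apply: partial_antitone => // [|i]; first exact: in_cube0.
  by rewrite mxE; case/andP: (hx i).
have lex1 : partial j f (const_mx 1) <= partial j f x.
  apply: partial_antitone => // [|i]; first exact: in_cube1.
  by rewrite mxE; case/andP: (hx i).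
have := ler_norm (partial j f 0); have := ler_norm (- partial j f (const_mx 1)).
have := normr_ge0 (partial j f 0); have := normr_ge0 (partial j f (const_mx 1)).
by rewrite normrN /partial_bound ler_norml => *; apply/andP; split; lra.
Qed.

Lemma DR_lipschitz a b : in_cube a -> in_cube b -> coord_le a b ->
  `|f b - f a| <= \sum_j partial_bound j * (b 0 j - a 0 j).
Proof.
move=> ha hb hab.
have [c c01 ->] := MVT_segment_derive (fun t _ => f_diff (a + t *: (b - a))).
rewrite derive_partialE //; apply: le_trans (ler_norm_sum _ _ _) _.
apply: ler_sum => j _; rewrite normrM !mxE ger0_norm ?subr_ge0 // mulrC.
by apply: ler_wpM2r; [rewrite subr_ge0 | apply/norm_partial_le/in_cube_segment].
Qed.

Definition cube_bound := `|f 0| + \sum_j partial_bound j.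

Lemma norm_le_cube_bound x : in_cube x -> `|f x| <= cube_bound.
Proof.
move=> hx; have le0x : coord_le 0 x by move=> i; rewrite mxE; case/andP: (hx i).
have := DR_lipschitz in_cube0 hx le0x.
have : \sum_j partial_bound j * (x 0 j - (0 : 'rV[R]_d) 0 j)
    <= \sum_j partial_bound j.
  apply: ler_sum => j _; rewrite mxE subr0; have /andP[_ ?] := hx j.
  by rewrite -[leRHS]mulr1 ler_wpM2l ?partial_bound_ge0.
have := ler_normD (f x - f 0) (f 0); rewrite subrK /cube_bound; lra.
Qed.

Section monotone_path.
Variable z : R -> 'rV[R]_d.
Hypotheses (z_cube : {in `[0, 1], forall mu, in_cube (z mu)})
  (z_mono : monotone_path z).

Lemma DR_path_measurable :
  measurable_fun (`[0, 1] : set R) (fun mu => f (z mu)).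
Proof.
(* [f \o z] is the difference of the nondecreasing [V] and [V - f \o z]. *)
pose V mu := \sum_j partial_bound j * z mu 0 j.
have V_nd : {in `[0, 1] &, {homo V : s t / s <= t}}.
  move=> s t sI tI st; apply: ler_sum => j _.
  by apply: ler_wpM2l; [exact: partial_bound_ge0 | exact: z_mono].
have Vf_nd : {in `[0, 1] &, {homo (fun mu => V mu - f (z mu)) : s t / s <= t}}.
  move=> s t sI tI st.
  have := DR_lipschitz (z_cube sI) (z_cube tI) (z_mono sI tI st).
  have -> : \sum_j partial_bound j * (z t 0 j - z s 0 j) = V t - V s.
    by rewrite -sumrB; apply: eq_bigr => j _; rewrite mulrBr.
  by have := ler_norm (f (z t) - f (z s)); lra.
apply: (eq_measurable_fun (fun mu => V mu - (V mu - f (z mu)))).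
  by move=> x _; rewrite subKr.
by apply: measurable_funB; apply: nondecreasing_itv_measurable.
Qed.

Lemma DR_path_integrable :
  lebesgue_measure.-integrable (`[0, 1] : set R) (EFin \o (fun mu => f (z mu))).
Proof.
apply: (bounded_itv_integrable DR_path_measurable) => mu /z_cube.
exact: norm_le_cube_bound.
Qed.

Lemma partial_path_antitone k :
  {in `[0, 1] &, {homo (fun mu => partial k f (z mu)) : s t /~ s <= t}}.
Proof.
move=> s t sI tI st.
by apply: partial_antitone; [exact: z_cube | exact: z_cube | exact: z_mono].
Qed.

End monotone_path.

Lemma DR_Rintegral_le_average_coord (z : R -> 'rV[R]_d) (k : 'I_d) :
  {in `[0, 1], forall mu, in_cube (z mu)} -> monotone_path z ->
  I01 (fun mu => f (z mu)) <=
  I01 (fun mu => f (set_coord (z mu) k (I01 (fun mu => z mu 0 k)))).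
Proof.
move=> z_cube z_mono; set c := I01 (fun mu => z mu 0 k).
have zk_nd : {in `[0, 1] &, {homo (fun mu => z mu 0 k) : s t / s <= t}}.
  by move=> s t sI tI st; exact: z_mono.
have zk01 : {in `[0, 1], forall mu, 0 <= z mu 0 k <= 1} by move=> mu /z_cube.
have /andP[c0 c1] : 0 <= c <= 1 by exact: Rintegral01_mem01.
pose p mu := set_coord (z mu) k c.
have p_cube : {in `[0, 1], forall mu, in_cube (p mu)}.
  by move=> mu /z_cube zc; apply: set_coord_in_cube; rewrite ?c0.
have p_mono : monotone_path p by exact: set_coord_path.
pose D mu := partial k f (p mu); pose w mu := z mu 0 k - c.
have D_anti : {in `[0, 1] &, {homo D : s t /~ s <= t}}.
  exact: partial_path_antitone.
have w_nd : {in `[0, 1] &, {homo w : s t / s <= t}}.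
  by move=> s t sI tI st; rewrite lerD2r zk_nd.
have DB : {in `[0, 1], forall mu, `|D mu| <= partial_bound k + 1}.
  by move=> mu /p_cube pc; rewrite (le_trans (norm_partial_le k pc)) ?lerDl.
have wB : {in `[0, 1], forall mu, `|w mu| <= partial_bound k + 1}.
  move=> mu /zk01 /andP[z0 z1]; have := partial_bound_ge0 k.
  by rewrite ler_norml /w => ?; apply/andP; split; lra.
have w0 : I01 w = 0.
  rewrite RintegralB ?Rintegral01_cst ?subrr //.
    apply: (bounded_itv_integrable (B := 1)).
      exact: nondecreasing_itv_measurable.
    by move=> mu /zk01 /andP[? ?]; rewrite ger0_norm.
  by apply: (bounded_itv_integrable (B := `|c|)).
have Dw_int := monotone_mul_itv_integrable D_anti w_nd DB wB.
have fp_int := DR_path_integrable p_cube p_mono.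
apply: (@le_trans _ _ (I01 (fun mu => f (p mu) + D mu * w mu))).
  apply: le_Rintegral => //; first exact: DR_path_integrable.
    by apply: eq_integrable (integrableD _ fp_int Dw_int).
  move=> mu muI; have pk : p mu 0 k = c by rewrite mxE eqxx.
  rewrite /D /w -pk; apply: DR_coord_concave; [exact: p_cube | exact: z_cube |].
  by move=> i ik; rewrite mxE (negbTE ik).
rewrite RintegralD // -[leRHS]addr0 lerD2l.
exact: chebyshev_Rintegral_le0 D_anti w_nd DB wB w0.
Qed.

End DR_submodular.

Section average_prefix.
Context {R : realType} {d : nat}.
Variable y : R -> 'rV[R]_d.
Hypotheses (y_cube : {in `[0, 1], forall mu, in_cube (y mu)})
  (y_mono : monotone_path y).

Definition average_prefix (n : nat) (mu : R) : 'rV[R]_d :=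
  \row_i if (i < n)%N then vec_integral01 y 0 i else y mu 0 i.

Lemma average_prefix0 : average_prefix 0 = y.
Proof. by apply/funext => mu; apply/rowP => i; rewrite mxE. Qed.

Lemma average_prefix_full : average_prefix d = fun=> vec_integral01 y.
Proof. by apply/funext => mu; apply/rowP => i; rewrite mxE ltn_ord. Qed.

Lemma average_prefixS (k : 'I_d) : average_prefix k.+1 = fun mu =>
  set_coord (average_prefix k mu) k (I01 (fun nu => average_prefix k nu 0 k)).
Proof.
apply/funext => mu; apply/rowP => i; rewrite !mxE ltnS leq_eqVlt val_eqE.
have [->|//] := eqVneq i k.
by apply: eq_Rintegral => nu _; rewrite mxE ltnn.
Qed.

Lemma vec_integral01_in_cube : in_cube (vec_integral01 y).
Proof.
move=> i; rewrite mxE; apply: Rintegral01_mem01 => [s t sI tI st|mu /y_cube //].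
exact: y_mono.
Qed.

Lemma average_prefix_in_cube n :
  {in `[0, 1], forall mu, in_cube (average_prefix n mu)}.
Proof.
move=> mu /y_cube yc i; rewrite mxE; case: ifP => // _.
exact: vec_integral01_in_cube.
Qed.

Lemma average_prefix_path n : monotone_path (average_prefix n).
Proof.
by move=> s t sI tI st i; rewrite !mxE; case: ifP => // _; apply: y_mono.
Qed.

End average_prefix.

Theorem mainTheorem9 (R : realType) (d : nat) (f : 'rV[R]_d -> R)
  (y : R -> 'rV[R]_d) :
  DR_submodular f ->
  (forall mu : R, 0 <= mu <= 1 -> in_cube (y mu)) ->
  coord_nondecr y ->
  Rintegral lebesgue_measure `[0%R, 1%R] (fun mu => f (y mu))
    <= f (vec_integral01 y).
Proof.
move=> f_DR y_cube /coord_nondecr_path y_mono.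
have {}y_cube : {in `[0, 1], forall mu, in_cube (y mu)}.
  by move=> mu; rewrite in_itv; apply: y_cube.
have le_prefix n : (n <= d)%N ->
    I01 (fun mu => f (y mu)) <= I01 (fun mu => f (average_prefix y n mu)).
  elim: n => [_|n IH nd]; first by rewrite average_prefix0.
  apply: le_trans (IH (ltnW nd)) _; rewrite (average_prefixS y (Ordinal nd)) /=.
  apply: DR_Rintegral_le_average_coord => //.
    exact: average_prefix_in_cube.
  exact: average_prefix_path.
apply: le_trans (le_prefix d (leqnn d)) _.
by rewrite average_prefix_full Rintegral01_cst.
Qed.
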